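(* Let $(V,\varphi,\xi,\eta,g)$, $\mathcal{F}$, $W_2$, $q_1,q_2$ be as in the context, and let $F\in W_2$ with associated operator $\mathcal{A}_\xi$. Then: (i) $F=q_1F$ if and only if $\mathcal{A}_\xi\circ\varphi=\varphi\circ\mathcal{A}_\xi$; (ii) $F=q_1F$ if and only if $F(X,Y,Z)=-F(\varphi X,\varphi Y,Z)-F(\varphi X,Y,\varphi Z)$ for all $X,Y,Z\in V$; (iii) $F=q_2F$ if and only if $\mathcal{A}_\xi\circ\varphi=-\varphi\circ\mathcal{A}_\xi$; (iv) $F=q_2F$ if and only if $F(X,Y,Z)=F(\varphi X,\varphi Y,Z)+F(\varphi X,Y,\varphi Z)$ for all $X,Y,Z\in V$.
   Context: Let $V$ be a real vector space of dimension $2n+1$ with an endomorphism $\varphi$, a vector $\xi$ and a linear form $\eta$ such that $\varphi\xi=0$, $\eta\circ\varphi=0$, $\eta(\xi)=1$, $\varphi^2=\mathrm{id}-\eta\otimes\xi$, and such that $\varphi$ restricted to $\mathbb{D}=\ker\eta$ has eigenvalues $\pm1$ with eigenspaces of equal dimension $n$. Let $g$ be a nondegenerate symmetric bilinear form on $V$ with $g(\varphi X,\varphi Y)=-g(X,Y)+\eta(X)\eta(Y)$; then $\eta(X)=g(X,\xi)$. Write $hX=X-\eta(X)\xi$. Fix a basis $\{e_1,\dots,e_{2n}\}$ of $\mathbb{D}$ and write $Y=Y^ie_i+\eta(Y)\xi$. Let $\mathcal{F}$ be the vector space of all $(0,3)$-tensors of the form $F(X,Y,Z)=Y^ig(\mathcal{A}_{e_i}X,Z)+\eta(Y)g(\mathcal{A}_\xi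 X,\varphi Z)$, where $\mathcal{A}_{e_i}:V\to V$ and $\mathcal{A}_\xi:V\to\mathbb{D}$ are linear maps satisfying for all $X$, $i,j$: $g(\mathcal{A}_{e_i}X,e_j)=-g(\mathcal{A}_{e_j}X,e_i)$; $\mathcal{A}_{\varphi e_i}X=-\varphi(\mathcal{A}_{e_i}X)-g(\mathcal{A}_\xi X,e_i)\xi$ (index extended linearly); $\eta(\mathcal{A}_{e_i}X)=-g(\mathcal{A}_\xi X,\varphi e_i)$; $\eta(\mathcal{A}_\xi X)=0$. These operators are determined by $F$ (e.g. $\mathcal{A}_\xi X\in\mathbb{D}$ is characterized by $g(\mathcal{A}_\xi X,\varphi Z)=F(X,\xi,Z)$ for all $Z$); $\mathcal{A}_\xi$ is called the operator associated with $F$. Let $p_2(F)(X,Y,Z)=-\eta(Y)F(hX,hZ,\xi)+\eta(Z)F(hX,hY,\xi)$ and $W_2=\{F\in\mathcal{F}:F=p_2F\}$; every $F\in W_2$ has the form $F(X,Y,Z)=-\eta(Y)g(\varphi(\mathcal{A}_\xi X),Z)+\eta(Z)g(\varphi(\mathcal{A}_\xi X),Y)$ with $\mathcal{A}_\xi\xi=0$. For $F\in W_2$ with associated operator $A=\mathcal{A}_\xi$, define $q_1(F)(X,Y,Z)=-\tfrac12\eta(Y)\{g(\varphi(AX),Z)+g(A(\varphi X),Z)\}+\tfrac12\eta(Z)\{g(\varphi(AX),Y)+g(A(\varphi X),Y)\}$, $q_2(F)(X,Y,Z)=-\tfrac12\eta(Y)\{g(\varphi(AX),Z)-g(A(\varphi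 X),Z)\}+\tfrac12\eta(Z)\{g(\varphi(AX),Y)-g(A(\varphi X),Y)\}$. *)

(* V is modelled as row vectors 'rV[R]_(2n+1) over R : realType;
   linear endomorphisms act on the right (X |-> X *m M). *)
From HB Require Import structures.
From mathcomp Require Import all_boot all_order all_algebra.
From mathcomp Require Import reals.
Set Implicit Arguments. Unset Strict Implicit. Unset Printing Implicit Defensive.
Import Order.TTheory GRing.Theory Num.Theory.
Local Open Scope ring_scope.

Notation vecV R n := 'rV[R]_(n.*2.+1).
Notation endV R n := 'M[R]_(n.*2.+1).

Section Defs.
Variables (R : realType) (n : nat).
Variables (phi : endV R n) (xi : vecV R n) (eta : 'cV[R]_(n.*2.+1)) (g : endV R n).

Definition etaf (X : vecV R n) : R := (X *m eta) 0 0.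
Definition bil (X Y : vecV R n) : R := (X *m g *m Y^T) 0 0.
Definition hproj (X : vecV R n) : vecV R n := X - etaf X *: xi.

Definition is_structure : Prop :=
  [/\ (xi *m phi = 0 /\ (forall X, etaf (X *m phi) = 0)),
      (etaf xi = 1 /\ (forall X, X *m phi *m phi = X - etaf X *: xi)),
      (\rank (eigenspace phi 1) = n /\ \rank (eigenspace phi (- 1)) = n),
      (g^T = g /\ g \in unitmx) &
      (forall X Y, bil (X *m phi) (Y *m phi) = - bil X Y + etaf X * etaf Y)].

(* e is a basis of D = ker eta, and c i Y = Y^i are the coordinates:
   Y = Y^i e_i + eta(Y) xi *)
Definition is_D_basis (e : 'I_(n.*2) -> vecV R n)
    (c : 'I_(n.*2) -> vecV R n -> R) : Prop :=
  [/\ (forall i, etaf (e i) = 0),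
      (forall Y, Y = \sum_i c i Y *: e i + etaf Y *: xi) &
      (forall a : 'I_(n.*2) -> R, \sum_i a i *: e i = 0 -> forall i, a i = 0)].

Variables (e : 'I_(n.*2) -> vecV R n) (c : 'I_(n.*2) -> vecV R n -> R).

Definition tensor3 := vecV R n -> vecV R n -> vecV R n -> R.

Definition in_calF (F : tensor3) : Prop :=
  exists (Ae : 'I_(n.*2) -> endV R n) (Axi : endV R n),
  [/\ (forall X i j, bil (X *m Ae i) (e j) = - bil (X *m Ae j) (e i)),
      (forall X i, X *m (\sum_j c j (e i *m phi) *: Ae j)
                   = - (X *m Ae i *m phi) - bil (X *m Axi) (e i) *: xi),
      (forall X i, etaf (X *m Ae i) = - bil (X *m Axi) (e i *m phi)),
      (forall X, etaf (X *m Axi) = 0) &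
      (forall X Y Z, F X Y Z = \sum_i c i Y * bil (X *m Ae i) Z
                               + etaf Y * bil (X *m Axi) (Z *m phi))].

Definition p2 (F : tensor3) : tensor3 := fun X Y Z =>
  - etaf Y * F (hproj X) (hproj Z) xi + etaf Z * F (hproj X) (hproj Y) xi.

Definition in_W2 (F : tensor3) : Prop :=
  in_calF F /\ forall X Y Z, F X Y Z = p2 F X Y Z.

Definition assoc_op (F : tensor3) (A : endV R n) : Prop :=
  (forall X, etaf (X *m A) = 0) /\
  (forall X Z, bil (X *m A) (Z *m phi) = F X xi Z).

Definition q1 (A : endV R n) : tensor3 := fun X Y Z =>
  - 2^-1 * etaf Y * (bil (X *m A *m phi) Z + bil (X *m phi *m A) Z)
  + 2^-1 * etaf Z * (bil (X *m A *m phi) Y + bil (X *m phi *m A) Y).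

Definition q2 (A : endV R n) : tensor3 := fun X Y Z =>
  - 2^-1 * etaf Y * (bil (X *m A *m phi) Z - bil (X *m phi *m A) Z)
  + 2^-1 * etaf Z * (bil (X *m A *m phi) Y - bil (X *m phi *m A) Y).

End Defs.

(** Matrices act on row vectors from the right, so the matrix [A *m phi] is phi o A.
    For F in W_2, the conditions F = p_2 F and g(A X, phi Z) = F(X, xi, Z) force
    F(X,Y,Z) = g(phi A X, Y) eta(Z) - eta(Y) g(phi A X, Z).  The tensors q_1 F, q_2 F and
    F(phi X, phi Y, Z) + F(phi X, Y, phi Z) have the same shape, with phi o A replaced by
    (phi A + A phi)/2, (phi A - A phi)/2 and -(A o phi).  A tensor of this shape determines
    its operator when that operator is D-valued (evaluate at Y = xi and use nondegeneracy
    of g), so each equivalence reduces to an identity between phi o A and A o phi. *)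
From HB Require Import structures.
From mathcomp Require Import all_boot all_order all_algebra.
From mathcomp Require Import reals.
From mathcomp Require Import ring lra.
Set Implicit Arguments. Unset Strict Implicit. Unset Printing Implicit Defensive.
Import Order.TTheory GRing.Theory Num.Theory.
Local Open Scope ring_scope.

Lemma mulmx_rV_eqP (R : fieldType) (m k : nat) (M N : 'M[R]_(m, k)) :
  (forall X : 'rV_m, X *m M = X *m N) <-> M = N.
Proof. by split=> [eqMN | -> //]; apply/eqP/mulmxP. Qed.

Section HalfScale.
Variables (R : numFieldType) (p q : nat).
Implicit Types M N : 'M[R]_(p, q).

Lemma double_eq M N : (2 : R) *: M = N -> M + M = N.
Proof. by rewrite scaler_nat mulr2n. Qed.

Lemma eq_half_addr M N : M = 2^-1 *: (M + N) <-> M = N.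
Proof.
have two_neq0 : (2 : R) != 0 by rewrite pnatr_eq0.
split=> [eqM | <-]; last by rewrite -mulr2n -scaler_nat scalerA mulVf // scale1r.
by have := congr1 ( *:%R 2) eqM; rewrite scalerA mulfV // scale1r => /double_eq/addrI.
Qed.

End HalfScale.

Section AlmostParacontact.
Variables (R : realType) (n : nat).
Variables (phi : endV R n) (xi : vecV R n) (eta : 'cV[R]_(n.*2.+1)) (g : endV R n).
Implicit Types (X Y Z W D : vecV R n) (B : endV R n).

Lemma etaf_mul_eq0P B : (forall X, etaf eta (X *m B) = 0) <-> B *m eta = 0.
Proof.
split=> [etaB0 | Beta0 X]; last by rewrite /etaf -mulmxA Beta0 mulmx0 mxE.
apply/matrixP=> i j; rewrite ord1 [RHS]mxE.
by have := etaB0 (delta_mx 0 i); rewrite /etaf -mulmxA -rowE mxE.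
Qed.

Lemma etaf0 : etaf eta 0 = 0.
Proof. by rewrite /etaf mul0mx mxE. Qed.

Lemma bilDl X Y Z : bil g (X + Y) Z = bil g X Z + bil g Y Z.
Proof. by rewrite /bil !mulmxDl !mxE. Qed.

Lemma bilNl X Y : bil g (- X) Y = - bil g X Y.
Proof. by rewrite /bil !mulNmx !mxE. Qed.

Lemma bilZl a X Y : bil g (a *: X) Y = a * bil g X Y.
Proof. by rewrite /bil -!scalemxAl !mxE. Qed.

Lemma bilBr X Y Z : bil g X (Y - Z) = bil g X Y - bil g X Z.
Proof. by rewrite /bil linearB /= mulmxBr !mxE. Qed.

Lemma bilZr a X Y : bil g X (a *: Y) = a * bil g X Y.
Proof. by rewrite /bil linearZ /= -scalemxAr !mxE. Qed.

Lemma bil0r X : bil g X 0 = 0.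
Proof. by rewrite -(scale0r 0) bilZr mul0r. Qed.

Lemma bil_nondeg D : g \in unitmx -> (forall Z, bil g D Z = 0) -> D = 0.
Proof.
move=> g_unit bilD0; suff Dg0 : D *m g = 0 by rewrite -(mulmxK g_unit D) Dg0 mul0mx.
apply/matrixP=> i j; rewrite ord1 [RHS]mxE.
by have := bilD0 (delta_mx 0 j); rewrite /bil trmx_delta -colE mxE.
Qed.

Definition eta_wedge B : tensor3 R n := fun X Y Z =>
  bil g (X *m B) Y * etaf eta Z - etaf eta Y * bil g (X *m B) Z.

Lemma eta_wedgeN B X Y Z : eta_wedge (- B) X Y Z = - eta_wedge B X Y Z.
Proof. by rewrite /eta_wedge mulmxN !bilNl; ring. Qed.

Hypotheses (xi_phi : xi *m phi = 0) (phi_eta : phi *m eta = 0) (eta_xi : etaf eta xi = 1).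
Hypothesis phi2 : forall X, X *m phi *m phi = X - etaf eta X *: xi.
Hypothesis g_unit : g \in unitmx.
Hypothesis bil_phi :
  forall X Y, bil g (X *m phi) (Y *m phi) = - bil g X Y + etaf eta X * etaf eta Y.

Lemma etaf_phi X : etaf eta (X *m phi) = 0.
Proof. exact: (etaf_mul_eq0P phi).2. Qed.

Lemma bil_xi X : bil g X xi = etaf eta X.
Proof. by have := bil_phi X xi; rewrite xi_phi bil0r eta_xi mulr1 => ?; lra. Qed.

Lemma bil_phi_skew W Z : bil g W (Z *m phi) = - bil g (W *m phi) Z.
Proof.
have := bil_phi W (Z *m phi); rewrite phi2 bilBr bilZr bil_xi.
by rewrite !etaf_phi !mulr0 subr0 addr0 => ?; lra.
Qed.

Lemma bil_phi_D W Y : etaf eta W = 0 -> bil g (W *m phi) (Y *m phi) = - bil g W Y.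
Proof. by move=> etaW0; rewrite bil_phi etaW0 mul0r addr0. Qed.

Lemma eta_wedge_eq0 D :
  etaf eta D = 0 -> (forall Y Z, bil g D Y * etaf eta Z = etaf eta Y * bil g D Z) -> D = 0.
Proof.
move=> etaD0 wedgeD; apply: bil_nondeg => // Y.
by have := wedgeD Y xi; rewrite eta_xi mulr1 bil_xi etaD0 mulr0.
Qed.

Lemma eq_eta_wedgeP (S T : tensor3 R n) B1 B2 :
    B1 *m eta = 0 -> B2 *m eta = 0 ->
    (forall X Y Z, S X Y Z = eta_wedge B1 X Y Z) ->
    (forall X Y Z, T X Y Z = eta_wedge B2 X Y Z) ->
  (forall X Y Z, S X Y Z = T X Y Z) <-> B1 = B2.
Proof.
move=> B1eta B2eta SE TE; split=> [eqST | eqB X Y Z]; last by rewrite SE TE eqB.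
apply/mulmx_rV_eqP => X; apply/eqP; rewrite -subr_eq0; apply/eqP.
apply: eta_wedge_eq0 => [|Y Z].
  by rewrite -mulmxBr (etaf_mul_eq0P _).2 // mulmxBl B1eta B2eta subrr.
by have := eqST X Y Z; rewrite SE TE /eta_wedge !bilDl !bilNl => ?; lra.
Qed.

Lemma eta_wedge_phi_shift B : B *m eta = 0 -> forall X Y Z,
  eta_wedge (B *m phi) (X *m phi) (Y *m phi) Z + eta_wedge (B *m phi) (X *m phi) Y (Z *m phi)
  = - eta_wedge (phi *m B) X Y Z.
Proof.
move=> Beta0 X Y Z; have etaXB := (etaf_mul_eq0P B).2 Beta0 (X *m phi).
rewrite /eta_wedge !mulmxA !bil_phi_D // !etaf_phi; ring.
Qed.

Lemma q1_eta_wedge A X Y Z :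
  q1 phi eta g A X Y Z = eta_wedge (2^-1 *: (A *m phi + phi *m A)) X Y Z.
Proof. by rewrite /q1 /eta_wedge -scalemxAr mulmxDr !mulmxA !bilZl !bilDl; ring. Qed.

Lemma q2_eta_wedge A X Y Z :
  q2 phi eta g A X Y Z = eta_wedge (2^-1 *: (A *m phi - phi *m A)) X Y Z.
Proof.
rewrite /q2 /eta_wedge -scalemxAr mulmxBr !mulmxA !bilZl !bilDl !bilNl; ring.
Qed.

Section W2.
Variables (e : 'I_(n.*2) -> vecV R n) (c : 'I_(n.*2) -> vecV R n -> R).
Variables (F : tensor3 R n) (A : endV R n).
Hypotheses (basis : is_D_basis xi eta e c) (W2F : in_W2 phi xi eta g e c F).
Hypothesis assocA : assoc_op phi xi eta g F A.

Lemma D_coord0 i : c i 0 = 0.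
Proof.
case: basis => _ decomp indep; apply: (indep (c^~ 0)); have := decomp 0.
by rewrite etaf0 scale0r addr0 => <-.
Qed.

Lemma W2_zero_middle X Z : F X 0 Z = 0.
Proof.
case: W2F => -[Ae [Axi [_ _ _ _ ->]]] _.
by rewrite big1 ?etaf0 ?mul0r ?addr0 // => i _; rewrite D_coord0 mul0r.
Qed.

Lemma W2_decomp X Y Z : F X Y Z = etaf eta Y * F X xi Z - etaf eta Z * F X xi Y.
Proof.
case: W2F => _ eqp2.
have hxi : hproj xi eta xi = 0 by rewrite /hproj eta_xi scale1r subrr.
have Fxi W U : F W xi U = - F (hproj xi eta W) (hproj xi eta U) xi.
  by rewrite eqp2 /p2 hxi W2_zero_middle eta_xi; ring.
by rewrite eqp2 /p2 !Fxi; ring.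
Qed.

Lemma W2_eta_wedge X Y Z : F X Y Z = eta_wedge (A *m phi) X Y Z.
Proof.
case: assocA => _ FA.
by rewrite W2_decomp -!FA !bil_phi_skew /eta_wedge mulmxA; ring.
Qed.

End W2.
End AlmostParacontact.

Theorem proposition4p2 (R : realType) (n : nat)
    (phi : 'M[R]_(n.*2.+1)) (xi : 'rV[R]_(n.*2.+1)) (eta : 'cV[R]_(n.*2.+1))
    (g : 'M[R]_(n.*2.+1))
    (e : 'I_(n.*2) -> 'rV[R]_(n.*2.+1))
    (c : 'I_(n.*2) -> 'rV[R]_(n.*2.+1) -> R)
    (F : 'rV[R]_(n.*2.+1) -> 'rV[R]_(n.*2.+1) -> 'rV[R]_(n.*2.+1) -> R)
    (A : 'M[R]_(n.*2.+1)) :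
  is_structure phi xi eta g ->
  is_D_basis xi eta e c ->
  in_W2 phi xi eta g e c F ->
  assoc_op phi xi eta g F A ->
  [/\ (forall X Y Z, F X Y Z = q1 phi eta g A X Y Z)
        <-> (forall X : 'rV[R]_(n.*2.+1), X *m phi *m A = X *m A *m phi),
      (forall X Y Z, F X Y Z = q1 phi eta g A X Y Z)
        <-> (forall X Y Z, F X Y Z = - F (X *m phi) (Y *m phi) Z
                                     - F (X *m phi) Y (Z *m phi)),
      (forall X Y Z, F X Y Z = q2 phi eta g A X Y Z)
        <-> (forall X : 'rV[R]_(n.*2.+1), X *m phi *m A = - (X *m A *m phi)) &
      (forall X Y Z, F X Y Z = q2 phi eta g A X Y Z)
        <-> (forall X Y Z, F X Y Z = F (X *m phi) (Y *m phi) Z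
                                     + F (X *m phi) Y (Z *m phi))].
Proof.
move=> [[xi_phi eta_phi] [eta_xi phi2] _ [_ g_unit] bil_phi] basis W2F assocA.
have phi_eta : phi *m eta = 0 by apply/etaf_mul_eq0P.
have A_eta : A *m eta = 0 by apply/etaf_mul_eq0P; case: assocA.
have Aphi_eta : A *m phi *m eta = 0 by rewrite -mulmxA phi_eta mulmx0.
have phiA_eta : phi *m A *m eta = 0 by rewrite -mulmxA A_eta mulmx0.
have FE := W2_eta_wedge xi_phi phi_eta eta_xi phi2 bil_phi basis W2F assocA.
have shiftE := eta_wedge_phi_shift phi_eta bil_phi A_eta.
have eqFP := eq_eta_wedgeP xi_phi eta_xi g_unit bil_phi Aphi_eta _ FE.
have q1P : (forall X Y Z, F X Y Z = q1 phi eta g A X Y Z) <-> A *m phi = phi *m A.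
  rewrite -eq_half_addr; apply: eqFP => [|X Y Z]; last exact: q1_eta_wedge.
  by rewrite -scalemxAl mulmxDl Aphi_eta phiA_eta addr0 scaler0.
have q2P : (forall X Y Z, F X Y Z = q2 phi eta g A X Y Z) <-> A *m phi = - (phi *m A).
  rewrite -eq_half_addr; apply: eqFP => [|X Y Z]; last exact: q2_eta_wedge.
  by rewrite -scalemxAl mulmxDl mulNmx Aphi_eta phiA_eta oppr0 addr0 scaler0.
have shift1P : (forall X Y Z, F X Y Z = - F (X *m phi) (Y *m phi) Z - F (X *m phi) Y (Z *m phi))
    <-> A *m phi = phi *m A.
  by apply: eqFP => // X Y Z; rewrite !FE -opprD shiftE opprK.
have shift2P : (forall X Y Z, F X Y Z = F (X *m phi) (Y *m phi) Z + F (X *m phi) Y (Z *m phi))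
    <-> A *m phi = - (phi *m A).
  by apply: eqFP => [|X Y Z]; rewrite ?mulNmx ?phiA_eta ?oppr0 // !FE shiftE eta_wedgeN.
have commP : (forall X : vecV R n, X *m phi *m A = X *m A *m phi) <-> A *m phi = phi *m A.
  split=> [eqXA | eqA X]; last by rewrite -!mulmxA eqA.
  by apply/mulmx_rV_eqP => X; rewrite !mulmxA eqXA.
have anticommP : (forall X : vecV R n, X *m phi *m A = - (X *m A *m phi)) <-> A *m phi = - (phi *m A).
  split=> [eqXA | eqA X]; last by rewrite -!mulmxA eqA mulmxN opprK.
  by apply/mulmx_rV_eqP => X; rewrite mulmxN !mulmxA eqXA opprK.
by split; rewrite ?q1P ?q2P ?shift1P ?shift2P ?commP ?anticommP.
Qed.
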